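(* For all integers $k$ and $m$ with $k \geq m \geq 0$, \[ \sum_{n=0}^{m} \binom{m}{n} \binom{k+n}{m} \binom{k+m+n}{m+n}^{-1} \frac{2n + k + 1}{m + n + k + 1} = 1 . \]
   Context: $\binom{a}{b}$ denotes the usual binomial coefficient $\frac{a!}{b!\,(a-b)!}$ for integers $0\le b\le a$. *)

From mathcomp Require Import all_boot all_order all_algebra.

From mathcomp Require Import all_boot all_order all_algebra.
From mathcomp Require Import ring.
Import GRing.Theory Num.Theory.
Local Open Scope ring_scope.

(* A Wilf-Zeilberger argument. Put
     h k n = C(m, n) C(k + n, m) (m + n)! k! / (k + m + n + 1)!,
   so that the n-th summand is F k n = (2n + k + 1) h k n. With the certificate
   G k n = n h k n one has F (k + 1) n - F k n = G k (n + 1) - G k n, and G k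
   vanishes at n = 0 and n = m + 1; hence the sum does not depend on k. For
   k = 0 only the term n = m survives, and it equals 1. *)

Lemma natr_mul_bin_down (R : pzRingType) (N j : nat) :
  (N.+1 * 'C(N, j))%:R = (N.+1%:R - j%:R) * 'C(N.+1, j)%:R :> R.
Proof.
have [le_jN1 | lt_N1j] := leqP j N.+1.
  by rewrite -natrB // -natrM -mul_bin_down.
by rewrite bin_small ?(ltnW lt_N1j) // (bin_small lt_N1j) !(muln0, mulr0).
Qed.

Section WilfZeilberger.

Variables (R : numFieldType) (m : nat).

Definition wz_kernel (k n : nat) : R :=
  ('C(m, n) * 'C(k + n, m) * (m + n)`! * k`!)%:R / (k + m + n).+1`!%:R.

Definition wz_sum (k : nat) : R :=
  \sum_(0 <= n < m.+1) (2 * n + k + 1)%:R * wz_kernel k n.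

Lemma summand_wz_kernel (k n : nat) :
  'C(m, n)%:R * 'C(k + n, m)%:R / 'C(k + m + n, m + n)%:R
    * ((2 * n + k + 1)%:R / (m + n + k + 1)%:R)
  = (2 * n + k + 1)%:R * wz_kernel k n.
Proof.
have fact_kmn : ('C(k + m + n, m + n) * ((m + n)`! * k`!))%N = (k + m + n)`!.
  by have := @bin_fact (k + m + n) (m + n); rewrite -addnA addnK; apply; exact: leq_addl.
rewrite /wz_kernel addn1 [(m + n + k)%N]addnC addnA.
rewrite factS -fact_kmn !natrM.
have nz_bin : 'C(k + m + n, m + n)%:R != 0 :> R.
  by rewrite pnatr_eq0 -lt0n bin_gt0 -addnA leq_addl.
have nz_fact (i : nat) : i`!%:R != 0 :> R by rewrite pnatr_eq0 -lt0n fact_gt0.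
by field; rewrite nz_bin !nz_fact -!natrD nat1r pnatr_eq0.
Qed.

(* Unlike [wz_kernel k n], this does not vanish when m = k + n + 1, so the three
   kernels entering the recurrence can all be written as explicit multiples of it. *)
Definition wz_pivot (k n : nat) : R :=
  ('C(m, n) * 'C((k + n).+1, m) * (m + n)`! * k`!)%:R / (k + m + n).+2`!%:R.

Lemma wz_kernel_succ_k (k n : nat) : wz_kernel k.+1 n = k.+1%:R * wz_pivot k n.
Proof.
rewrite /wz_kernel /wz_pivot !addSn factS.
by rewrite [(_ * (k.+1 * _))%N]mulnCA [(_ * _ * _ * _)%N]mulnC !natrM !mulrA.
Qed.

Lemma wz_kernel_succ_n (k n : nat) : (n <= m)%N ->
  n.+1%:R * wz_kernel k n.+1 = (m%:R - n%:R) * (m + n).+1%:R * wz_pivot k n.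
Proof.
move=> le_nm; rewrite /wz_kernel /wz_pivot !addnS factS -natrB // !mulrA -!natrM.
by congr (_%:R / _); rewrite !mulnA mul_bin_left; ring.
Qed.

Lemma wz_kernel_pivot (k n : nat) :
  (k + n).+1%:R * wz_kernel k n
  = ((k + n).+1%:R - m%:R) * (k + m + n).+2%:R * wz_pivot k n.
Proof.
have bin_eq : 'C(k + n, m)%:R
               = ((k + n).+1%:R - m%:R) * 'C((k + n).+1, m)%:R / (k + n).+1%:R :> R.
  by rewrite -natr_mul_bin_down natrM mulrC mulKf // pnatr_eq0.
have nz_D : (k + m + n).+1`!%:R != 0 :> R by rewrite pnatr_eq0 -lt0n fact_gt0.
have nz_N2 : (k + m + n).+2%:R != 0 :> R by rewrite pnatr_eq0.
have nz_N1 : (k + n).+1%:R != 0 :> R by rewrite pnatr_eq0.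
rewrite /wz_kernel /wz_pivot [(k + m + n).+2`!]factS [(_.+2 * _)%:R]natrM.
(* Abstract the casts, lest [field] unfold the factorial and expand the sums. *)
move: (k + m + n).+1`!%:R (k + m + n).+2%:R (k + n).+1%:R nz_D nz_N2 nz_N1 bin_eq.
move=> D N2 N1 nz_D nz_N2 nz_N1 bin_eq; rewrite !natrM bin_eq.
by field; rewrite nz_D nz_N2 nz_N1.
Qed.

Lemma wz_step (k n : nat) : (n <= m)%N ->
  (2 * n + k.+1 + 1)%:R * wz_kernel k.+1 n - (2 * n + k + 1)%:R * wz_kernel k n
  = n.+1%:R * wz_kernel k n.+1 - n%:R * wz_kernel k n.
Proof.
move=> le_nm.
have pivot_eq : (2 * n + k.+1 + 1)%:R * wz_kernel k.+1 n - n.+1%:R * wz_kernel k n.+1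
                = (k + n).+1%:R * wz_kernel k n.
  by rewrite wz_kernel_succ_k wz_kernel_succ_n // wz_kernel_pivot; ring.
apply/eqP; rewrite -subr_eq0 -(subrr ((k + n).+1%:R * wz_kernel k n)).
by rewrite -[X in _ == X - _]pivot_eq; apply/eqP; ring.
Qed.

Lemma wz_sum_succ (k : nat) : wz_sum k.+1 = wz_sum k.
Proof.
apply/eqP; rewrite -subr_eq0 /wz_sum -sumrB.
rewrite (telescope_sumr_eq (fun n => n%:R * wz_kernel k n)) //; last first.
  by move=> n /andP[_ lt_nm1]; apply: wz_step.
by rewrite /wz_kernel bin_small // !(mul0n, muln0, mul0r, mulr0) subrr.
Qed.

Lemma wz_sum0 : wz_sum 0 = 1.
Proof.
rewrite /wz_sum big_nat_recr //= big1_seq ?add0r; last first.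
  move=> n /andP[_]; rewrite mem_index_iota => /andP[_ lt_nm].
  by rewrite /wz_kernel add0n (bin_small lt_nm) !(muln0, mul0n, mul0r, mulr0).
rewrite /wz_kernel !add0n binn fact0 factS addn0 mul2n -addnn addn1 !muln1 mul1n.
have nz_fact : (m + m)`!%:R != 0 :> R by rewrite pnatr_eq0 -lt0n fact_gt0.
by rewrite natrM invfM mulrCA mulVKf ?mulfV // pnatr_eq0.
Qed.

End WilfZeilberger.

Theorem mainTheorem1 (k m : nat) (hmk : (m <= k)%N) :
  \sum_(0 <= n < m.+1)
     ('C(m, n)%:R * 'C(k + n, m)%:R / 'C(k + m + n, m + n)%:R
        * ((2 * n + k + 1)%:R / (m + n + k + 1)%:R)) = (1 : rat).
Proof.
(* The identity holds for every k. *)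
clear hmk.
rewrite (eq_bigr _ (fun n _ => summand_wz_kernel rat m k n)) -/(wz_sum rat m k).
elim: k => [|k IHk]; first exact: wz_sum0.
by rewrite wz_sum_succ.
Qed.
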